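(* Suppose that $$\frac{\Gamma,\rho\dashv\sigma\vartriangleright\rho_1\dashv\sigma_1\quad\cdots\quad\Gamma,\rho\dashv\sigma\vartriangleright\rho_n\dashv\sigma_n}{\Gamma\vartriangleright\rho\dashv\sigma}$$ is an instance of rule $(+,+)$, $(\oplus,+)$ or $(+,\oplus)$ of the formal system for compliance. Then for all histories $\vec\delta,\vec\gamma$ and for all $i=1,\dots,n$ there exist histories $\vec\delta_i,\vec\gamma_i$ such that $\langle\vec\delta,\rho\rangle\parallel\langle\vec\gamma,\sigma\rangle$ reduces in zero or more steps to $\langle\vec\delta_i,\rho_i\rangle\parallel\langle\vec\gamma_i,\sigma_i\rangle$ by a reduction sequence in which rule (rbk) is never used.
   Context: Let $\mathcal N$ be a countable set of names and $\overline{\mathcal N}=\{\bar a\mid a\in\mathcal N\}$ a disjoint set of conames; $\alpha$ ranges over $\mathcal N\cup\overline{\mathcal N}$, with $\bar{\bar a}=a$. Retractable contracts are the closed expressions generated by $\sigma ::= \mathbf 1 \mid \sum_{i\in I} a_i.\sigma_i \ (\text{input}) \mid \sum_{i\in I}\bar a_i.\sigma_i\ (\text{retractable output}) \mid \bigoplus_{i\in I}\bar a_i.\sigma_i\ (\text{unretractable output}) \mid x \mid \mathsf{rec}\,x.\sigma$, where $I$ is non-empty and finite, names/conames in each choice are pairwise distinct, and $\sigma$ is not a variable in $\mathsf{rec}\,x.\sigma$. Choices are commutative; $\mathsf{rec}\,x.\sigma$ is identified with $\sigma[\mathsf{rec}\,x.\sigma/x]$. A unary $\bar a.\sigma$ may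 be read as either kind of output. Histories are stacks $\vec\gamma ::= [\,] \mid \vec\gamma:\sigma$ with $\sigma$ a retractable contract or the special symbol $\circ$. A contract with history is a pair $\langle\vec\gamma,\sigma\rangle$ with $\sigma$ a contract or $\circ$. Transitions: $\langle\vec\gamma,\alpha.\sigma+\sigma'\rangle\xrightarrow{\alpha}\langle\vec\gamma:\sigma',\sigma\rangle$ (for retractable choices, $+$ being input or retractable output sum); $\langle\vec\gamma,\bar a.\sigma\oplus\sigma'\rangle\xrightarrow{\tau}\langle\vec\gamma,\bar a.\sigma\rangle$; $\langle\vec\gamma,\alpha.\sigma\rangle\xrightarrow{\alpha}\langle\vec\gamma:\circ,\sigma\rangle$; $\langle\vec\gamma:\sigma',\sigma\rangle\xrightarrow{\mathsf{rb}}\langle\vec\gamma,\sigma'\rangle$. Client/server pairs $\langle\vec\delta,\rho\rangle\parallel\langle\vec\gamma,\sigma\rangle$ reduce by: (comm) if $\langle\vec\delta,\rho\rangle\xrightarrow{\alpha}\langle\vec\delta',\rho'\rangle$ and $\langle\vec\gamma,\sigma\rangle\xrightarrow{\bar\alpha}\langle\vec\gamma',\sigma'\rangle$ then the pair reduces to $\langle\vec\delta',\rho'\rangle\parallel\langle\vec\gamma',\sigma'\rangle$; ($\tau$) a $\tau$-transition of either component alone; (rbk) if both components do an $\mathsf{rb}$ transition and $\rho\neq\mathbf 1$, both roll back simultaneously; rule (rbk) applies only if neither (comm) nor ($\tau$) applies. Rules of the formal system (judgments $\Gamma\vartriangleright\rho\dashv\sigma$, $\Gamma$ a set of expressions $\rho'\dashv\sigma'$;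 applied modulo fold/unfold of recursion): $(+,+)$ if $\rho=\sum_{i\in I}\alpha_i.\rho_i$, $\sigma=\sum_{j\in J}\bar\alpha_j.\sigma_j$ are retractable choices and $k\in I\cap J$, from $\Gamma,\rho\dashv\sigma\vartriangleright\rho_k\dashv\sigma_k$ infer $\Gamma\vartriangleright\rho\dashv\sigma$; $(\oplus,+)$ from $\Gamma,\bigoplus_{i\in I}\bar a_i.\rho_i\dashv\sum_{j\in I\cup J}a_j.\sigma_j\vartriangleright\rho_i\dashv\sigma_i$ for all $i\in I$ infer $\Gamma\vartriangleright\bigoplus_{i\in I}\bar a_i.\rho_i\dashv\sum_{j\in I\cup J}a_j.\sigma_j$; $(+,\oplus)$ from $\Gamma,\sum_{j\in I\cup J}a_j.\sigma_j\dashv\bigoplus_{i\in I}\bar a_i.\rho_i\vartriangleright\rho_i\dashv\sigma_i$ for all $i\in I$ infer $\Gamma\vartriangleright\sum_{j\in I\cup J}a_j.\sigma_j\dashv\bigoplus_{i\in I}\bar a_i.\rho_i$. *)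

From Stdlib Require Import List Permutation Relations Arith.
Import ListNotations.

Definition name := nat.
Definition var := nat.

(* Contracts.  [Inp l]  = sum_{(a,s) in l} a.s       (input, retractable)
               [ROut l] = sum_{(a,s) in l} abar.s    (retractable output)
               [UOut l] = oplus_{(a,s) in l} abar.s  (unretractable output) *)
Inductive contract : Type :=
| One : contract
| Inp : list (name * contract) -> contract
| ROut : list (name * contract) -> contract
| UOut : list (name * contract) -> contract
| Var : var -> contract
| Rec : var -> contract -> contract.

Fixpoint fv (c : contract) : list var :=
  match c with
  | One => []
  | Inp l | ROut l | UOut l =>
      (fix fvl (l : list (name * contract)) : list var :=
         match l with [] => [] | (_, t) :: l' => fv t ++ fvl l' end) l
  | Var x => [x]
  | Rec x t => filter (fun y => negb (Nat.eqb x y)) (fv t)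
  end.

Definition closed (c : contract) : Prop := fv c = [].

Fixpoint wfs (c : contract) : Prop :=
  match c with
  | One => True
  | Inp l | ROut l | UOut l =>
      l <> [] /\ NoDup (map fst l) /\
      (fix wfl (l : list (name * contract)) : Prop :=
         match l with [] => True | (_, t) :: l' => wfs t /\ wfl l' end) l
  | Var _ => True
  | Rec _ t => (match t with Var _ => False | _ => True end) /\ wfs t
  end.

Definition wf (c : contract) : Prop := closed c /\ wfs c.

Fixpoint subst (x : var) (u : contract) (c : contract) : contract :=
  match c with
  | One => One
  | Inp l => Inp (map (fun p => (fst p, subst x u (snd p))) l)
  | ROut l => ROut (map (fun p => (fst p, subst x u (snd p))) l)
  | UOut l => UOut (map (fun p => (fst p, subst x u (snd p))) l)
  | Var y => if Nat.eqb x y then u else Var y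
  | Rec y t => if Nat.eqb x y then Rec y t else Rec y (subst x u t)
  end.

Definition unfold1 (c c' : contract) : Prop :=
  exists x t, c = Rec x t /\ c' = subst x (Rec x t) t.
Definition unfolds : contract -> contract -> Prop := clos_refl_trans _ unfold1.

(* Histories: stacks, head of the list = top of the stack.
   [None] stands for the special symbol o (circ). *)
Definition hist := list (option contract).
Definition wf_hist (h : hist) : Prop :=
  Forall (fun o => match o with Some c => wf c | None => True end) h.

(* contracts with history <h, s>, s a contract or o *)
Definition cwh := (hist * option contract)%type.

Inductive pol := PIn | POut.
Definition co (p : pol) : pol := match p with PIn => POut | POut => PIn end.

Inductive lab := LAct (p : pol) (a : name) | LTau | LRb.

(* retractable choices (input sums and retractable output sums; a unary
   output may be read as either kind) with the polarity of their actions *)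
Definition retr_view (c : contract) (l : list (name * contract)) (p : pol) : Prop :=
  (c = Inp l /\ p = PIn) \/ (c = ROut l /\ p = POut) \/
  (c = UOut l /\ length l = 1 /\ p = POut).

Definition unretr_view (c : contract) (l : list (name * contract)) : Prop :=
  c = UOut l \/ (c = ROut l /\ length l = 1).

Definition same_kind (c : contract) (l : list (name * contract)) : contract :=
  match c with Inp _ => Inp l | UOut _ => UOut l | _ => ROut l end.

Inductive lts : cwh -> lab -> cwh -> Prop :=
| t_sum : forall g c l p a s rest,
    retr_view c l p -> Permutation l ((a, s) :: rest) -> rest <> [] ->
    lts (g, Some c) (LAct p a) (Some (same_kind c rest) :: g, Some s)
| t_tau : forall g l a s rest,
    Permutation l ((a, s) :: rest) -> rest <> [] ->
    lts (g, Some (UOut l)) LTau (g, Some (UOut [(a, s)]))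
| t_unary : forall g c a s p,
    ((c = Inp [(a, s)] /\ p = PIn) \/ (c = ROut [(a, s)] /\ p = POut) \/
     (c = UOut [(a, s)] /\ p = POut)) ->
    lts (g, Some c) (LAct p a) (None :: g, Some s)
| t_rb : forall g h s,
    lts (h :: g, s) LRb (g, h)
| t_rec : forall g x t l g' s',   (* recursion is identified with its unfolding *)
    lts (g, Some (subst x (Rec x t) t)) l (g', s') ->
    lts (g, Some (Rec x t)) l (g', s').

Definition cfg := (cwh * cwh)%type.
Inductive red_rule := RComm | RTau | RRbk.

Inductive red_nrb : red_rule -> cfg -> cfg -> Prop :=
| r_comm : forall C C' S S' p a,
    lts C (LAct p a) C' -> lts S (LAct (co p) a) S' -> red_nrb RComm (C, S) (C', S')
| r_tau_l : forall C C' S, lts C LTau C' -> red_nrb RTau (C, S) (C', S)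
| r_tau_r : forall C S S', lts S LTau S' -> red_nrb RTau (C, S) (C, S').

Inductive red : red_rule -> cfg -> cfg -> Prop :=
| r_nrb : forall r X Y, red_nrb r X Y -> red r X Y
| r_rbk : forall C C' S S',
    lts C LRb C' -> lts S LRb S' -> snd C <> Some One ->
    (forall r Y, ~ red_nrb r (C, S) Y) ->
    red RRbk (C, S) (C', S').

Definition reds_no_rbk : cfg -> cfg -> Prop :=
  clos_refl_trans _ (fun X Y => exists r, r <> RRbk /\ red r X Y).

(* judgments  Gamma |> rho -| sigma *)
Definition judg := (list (contract * contract) * contract * contract)%type.

(* instances of rules (+,+), (oplus,+), (+,oplus), applied modulo unfolding
   of recursion; [rule_instance prems concl] *)
Inductive rule_instance : list judg -> judg -> Prop :=
| ri_pp : forall G rho sigma rho' sigma' l1 l2 p1 p2 k rk sk,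
    unfolds rho rho' -> unfolds sigma sigma' ->
    retr_view rho' l1 p1 -> retr_view sigma' l2 p2 -> p2 = co p1 ->
    In (k, rk) l1 -> In (k, sk) l2 ->
    rule_instance [((rho, sigma) :: G, rk, sk)] (G, rho, sigma)
| ri_op : forall G rho sigma rho' sigma' lr ls prems,
    unfolds rho rho' -> unfolds sigma sigma' ->
    unretr_view rho' lr -> sigma' = Inp ls ->
    Forall2 (fun (ar : name * contract) (j : judg) =>
               exists s, In (fst ar, s) ls /\ j = ((rho, sigma) :: G, snd ar, s))
            lr prems ->
    rule_instance prems (G, rho, sigma)
| ri_po : forall G rho sigma rho' sigma' lr ls prems,
    unfolds rho rho' -> unfolds sigma sigma' ->
    rho' = Inp ls -> unretr_view sigma' lr ->
    Forall2 (fun (ar : name * contract) (j : judg) =>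
               exists s, In (fst ar, s) ls /\ j = ((rho, sigma) :: G, s, snd ar))
            lr prems ->
    rule_instance prems (G, rho, sigma).

(* Each premise of the three rules is reached by the pair in at most two
   reductions, neither of which is a rollback: in (+,+) the two retractable
   choices synchronise directly on the common branch k; in (oplus,+) the
   unretractable output first commits to the chosen branch by a tau step
   (none is needed when it is unary) and then synchronises with the input.
   Rule (+,oplus) is (oplus,+) with client and server exchanged, and the
   reduction relation is symmetric in the two components. *)

From Stdlib Require Import List Permutation Relations Arith Lia.
Import ListNotations.

Lemma lts_unfolds (c c' : contract) : unfolds c c' ->
  forall g l X, lts (g, Some c') l X -> lts (g, Some c) l X.
Proof.
  induction 1 as [c c' [x [t [-> ->]]] | | ]; intros g l [g' s'] Hl; auto.
  now apply t_rec.
Qed.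

Lemma in_singleton_or_perm_cons (a : name) (s : contract) l : In (a, s) l ->
  l = [(a, s)] \/ exists rest, Permutation l ((a, s) :: rest) /\ rest <> [].
Proof.
  intros [l1 [l2 ->]]%in_split.
  destruct (l1 ++ l2) as [|p l'] eqn:E.
  - left. now apply app_eq_nil in E as [-> ->].
  - right. exists (l1 ++ l2). split.
    + symmetry. apply Permutation_middle.
    + now rewrite E.
Qed.

Lemma retr_view_lts c l p a s g : retr_view c l p -> In (a, s) l ->
  exists h, lts (g, Some c) (LAct p a) (h, Some s).
Proof.
  intros Hv Hin.
  destruct (in_singleton_or_perm_cons a s l Hin) as [-> | [rest [Hp Hr]]].
  - eexists. apply t_unary.
    destruct Hv as [[-> ->] | [[-> ->] | [-> [_ ->]]]]; auto.
  - eexists. eapply t_sum; eauto.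
Qed.

Lemma reds_step r X Y : r <> RRbk -> red_nrb r X Y -> reds_no_rbk X Y.
Proof. intros Hr HXY. apply rt_step. exists r. split; [exact Hr | now constructor]. Qed.

Lemma reds_comm C C' S S' p a :
  lts C (LAct p a) C' -> lts S (LAct (co p) a) S' -> reds_no_rbk (C, S) (C', S').
Proof. intros HC HS. apply reds_step with RComm; [discriminate | now apply r_comm with p a]. Qed.

Lemma red_nrb_swap r C S C' S' :
  red_nrb r (C, S) (C', S') -> red_nrb r (S, C) (S', C').
Proof.
  inversion 1; subst.
  - apply r_comm with (co p) a; [assumption |]. now destruct p.
  - now apply r_tau_r.
  - now apply r_tau_l.
Qed.

Lemma reds_no_rbk_swap X Y :
  reds_no_rbk X Y -> reds_no_rbk (snd X, fst X) (snd Y, fst Y).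
Proof.
  induction 1 as [[C S] [C' S'] [r [Hr Hred]] | | ].
  - inversion Hred as [r' X' Y' Hnrb | ]; subst; [| contradiction].
    eapply reds_step; [exact Hr | now apply red_nrb_swap].
  - apply rt_refl.
  - eapply rt_trans; eassumption.
Qed.

Lemma reds_commit_out rho rho' l a r g S S' :
  unfolds rho rho' -> unretr_view rho' l -> In (a, r) l ->
  lts S (LAct PIn a) S' ->
  reds_no_rbk ((g, Some rho), S) ((None :: g, Some r), S').
Proof.
  intros Hu Hv Hin HS.
  destruct (in_singleton_or_perm_cons a r l Hin) as [-> | [rest [Hp Hr]]].
  - apply reds_comm with POut a; [| exact HS].
    apply (lts_unfolds _ _ Hu), t_unary.
    destruct Hv as [-> | [-> _]]; auto.
  - destruct Hv as [-> | [-> Hlen]].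
    + apply rt_trans with ((g, Some (UOut [(a, r)])), S).
      * apply reds_step with RTau; [discriminate |].
        apply r_tau_l, (lts_unfolds _ _ Hu). eapply t_tau; eassumption.
      * apply reds_comm with POut a; [| exact HS]. now apply t_unary; auto.
    + apply Permutation_length in Hp. destruct rest; cbn in *; [easy | lia].
Qed.

Lemma Forall2_in_r (A B : Type) (R : A -> B -> Prop) l1 l2 y :
  Forall2 R l1 l2 -> In y l2 -> exists x, In x l1 /\ R x y.
Proof.
  induction 1 as [| x y' xs ys Hxy _ IH]; [easy |].
  intros [<- | Hin]; [eauto with datatypes |].
  destruct (IH Hin) as [z [? ?]]; eauto with datatypes.
Qed.

Theorem lemma2 :
  forall (prems : list judg) (G : list (contract * contract)) (rho sigma : contract),
    wf rho -> wf sigma ->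
    rule_instance prems (G, rho, sigma) ->
    forall (delta gamma : hist), wf_hist delta -> wf_hist gamma ->
    forall (G' : list (contract * contract)) (rho_i sigma_i : contract),
      In (G', rho_i, sigma_i) prems ->
      exists delta_i gamma_i : hist,
        reds_no_rbk ((delta, Some rho), (gamma, Some sigma))
                    ((delta_i, Some rho_i), (gamma_i, Some sigma_i)).
Proof.
  intros prems G rho sigma _ _ HR delta gamma _ _ G' rho_i sigma_i Hin.
  inversion HR as [? ? ? rho' sigma' l1 l2 p1 p2 k rk sk Hur Hus Hv1 Hv2 -> Hk1 Hk2
                  | ? ? ? rho' sigma' lr ls ? Hur Hus Hv -> Hprems
                  | ? ? ? rho' sigma' lr ls ? Hur Hus -> Hv Hprems]; subst.
  - destruct Hin as [[= <- <- <-] | []].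
    destruct (retr_view_lts _ _ _ _ _ delta Hv1 Hk1) as [h1 H1].
    destruct (retr_view_lts _ _ _ _ _ gamma Hv2 Hk2) as [h2 H2].
    exists h1, h2.
    apply reds_comm with p1 k;
      [exact (lts_unfolds _ _ Hur _ _ _ H1) | exact (lts_unfolds _ _ Hus _ _ _ H2)].
  - destruct (Forall2_in_r _ _ _ _ _ _ Hprems Hin) as [[a r] [Ha [s [Hs [= _ -> ->]]]]].
    destruct (retr_view_lts (Inp ls) ls PIn a s gamma) as [h2 H2]; [now left | exact Hs |].
    exists (None :: delta), h2.
    eapply reds_commit_out; [eassumption .. | exact (lts_unfolds _ _ Hus _ _ _ H2)].
  - destruct (Forall2_in_r _ _ _ _ _ _ Hprems Hin) as [[a r] [Ha [s [Hs [= _ -> ->]]]]].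
    destruct (retr_view_lts (Inp ls) ls PIn a s delta) as [h1 H1]; [now left | exact Hs |].
    exists h1, (None :: gamma).
    apply (reds_no_rbk_swap ((gamma, Some sigma), (delta, Some rho))
                            ((None :: gamma, Some r), (h1, Some s))).
    eapply reds_commit_out; [eassumption .. | exact (lts_unfolds _ _ Hur _ _ _ H1)].
Qed.
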